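(* Let $0\le\alpha<1$ and $K_\alpha:=\operatorname{conv}\{\pm(1,\alpha),\pm(0,1)\}\subseteq\mathbb{R}^2$. Then $\mu_2(K_\alpha)=\frac12\max\{1+\alpha,2-\alpha\}$.
   Context: For a closed convex set $K\subseteq\mathbb{R}^2$ with non-empty interior, $\mu_2(K):=\inf\{t\ge0: tK+\mathbb{Z}^2=\mathbb{R}^2\}$ (the second covering minimum, or inhomogeneous minimum). *)

From mathcomp Require Import all_boot all_order all_algebra.
From mathcomp Require Import classical_sets reals.
Set Implicit Arguments. Unset Strict Implicit. Unset Printing Implicit Defensive.
Import Order.TTheory GRing.Theory Num.Theory.
Local Open Scope ring_scope.
Local Open Scope classical_set_scope.

Definition conv2 {R : realType} (s : seq (R * R)) : set (R * R) :=
  [set p | exists l : nat -> R,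
     (forall i, 0 <= l i) /\ \sum_(i < size s) l i = 1 /\
     p = (\sum_(i < size s) l i * (nth (0,0) s i).1,
          \sum_(i < size s) l i * (nth (0,0) s i).2)].

Definition K_alpha {R : realType} (a : R) : set (R * R) :=
  conv2 [:: (1, a); (-1, -a); (0, 1); (0, -1)].

Definition covers {R : realType} (t : R) (K : set (R * R)) : Prop :=
  forall x : R * R, exists (k1 k2 : int) (y : R * R),
    K y /\ x = (t * y.1 + k1%:~R, t * y.2 + k2%:~R).

Definition mu2 {R : realType} (K : set (R * R)) : R :=
  inf [set t : R | 0 <= t /\ covers t K].

From mathcomp Require Import all_boot all_order all_algebra.
From mathcomp Require Import classical_sets reals.
From mathcomp Require Import ring lra zify.
Import Order.TTheory GRing.Theory Num.Theory.
Local Open Scope ring_scope.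

(* In the sheared coordinates (x, y - a x) the body K_alpha a becomes the
   cross-polytope |u| + |v| <= 1; equivalently it is the intersection of the
   strips |(1 + a) x - y| <= 1 and |(1 - a) x + y| <= 1.

   Lower bound: the points (1/2, 1/2) and (1/2, 0) are at K_alpha-distance
   at least (2 - a)/2 and (1 + a)/2 from every lattice point.
   Upper bound: reduce x modulo 1 into [0, 1), then y - a x modulo 1; once
   2 t >= 1 + a and 2 t >= 2 - a, the point lies in the t-dilate of K_alpha
   around one of the lattice points (0, 0), (0, 1), (1, 1). *)

Lemma mem_lb_inf (R : realType) (E : set R) (x : R) :
  E x -> lbound E x -> inf E = x.
Proof.
move=> Ex lbx; apply/eqP; rewrite eq_le; apply/andP; split.
- by apply: ge_inf => //; exists x.
- by apply: lb_le_inf => //; exists x.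
Qed.

Lemma intr_cases (R : realDomainType) (k : int) :
  k%:~R <= -1 :> R \/ k%:~R = 0 :> R \/ 1 <= k%:~R :> R.
Proof.
have : (k <= -1)%R \/ k = 0 \/ (1 <= k)%R by lia.
by case=> [|[->|]]; rewrite -?(ler_int R); [left | right; left | right; right].
Qed.

Lemma half_sub_intr_cases (R : realFieldType) (k : int) :
  2 * (1/2 - k%:~R) <= -1 :> R \/ 1 <= 2 * (1/2 - k%:~R) :> R.
Proof. by case: (intr_cases R k) => [h|[->|h]]; lra. Qed.

Definition K_alpha_ball {R : realType} (a t : R) (p : R * R) : Prop :=
  -t <= (1 + a) * p.1 - p.2 <= t /\ -t <= (1 - a) * p.1 + p.2 <= t.

Section KAlpha.
Context {R : realType} {a : R}.

Lemma K_alpha_sub_ball (p : R * R) : K_alpha a p -> K_alpha_ball a 1 p.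
Proof.
case=> l [l0 [l1 ->]]; move: l1.
rewrite /K_alpha_ball /= !big_ord_recr !big_ord0 /= !add0r => l1.
have := l0 0%N; have := l0 1%N; have := l0 2%N; have := l0 3%N.
by split; apply/andP; split; lra.
Qed.

Lemma K_alpha_ball_sub (p : R * R) : K_alpha_ball a 1 p -> K_alpha a p.
Proof.
case: p => x y; rewrite /K_alpha_ball /= => -[/andP[u1 u2] /andP[v1 v2]].
pose w := y - a * x.
have xw1 : `|x| + `|w| <= 1.
  by case: (ger0P x) => ?; case: (ger0P w) => ?; rewrite /w; lra.
have xx : 0 <= `|x| + x /\ 0 <= `|x| - x by case: (ger0P x) => ?; lra.
have ww : 0 <= `|w| + w /\ 0 <= `|w| - w by case: (ger0P w) => ?; lra.
(* (x, y) = x (1, a) + w (0, 1); the slack 1 - |x| - |w| is split evenly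
   between (0, 1) and (0, -1). *)
pose r := 1 - `|x| - `|w|.
pose l i := match i with
  | 0%N => (`|x| + x) / 2 | 1%N => (`|x| - x) / 2
  | 2%N => (`|w| + w + r) / 2 | _ => (`|w| - w + r) / 2 end.
exists l; split; [|split].
- by case=> [|[|[|i]]]; rewrite /l /r; lra.
- by rewrite !big_ord_recr big_ord0 /= add0r /l /r; lra.
- by rewrite /= !big_ord_recr !big_ord0 /= !add0r /l /r /w; congr (_, _); lra.
Qed.

Lemma K_alphaP (p : R * R) : K_alpha a p <-> K_alpha_ball a 1 p.
Proof. by split; [exact: K_alpha_sub_ball | exact: K_alpha_ball_sub]. Qed.

Lemma K_alpha_ball_mulr {t : R} {p : R * R} : 0 <= t ->
  K_alpha_ball a 1 p -> K_alpha_ball a t (t * p.1, t * p.2).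
Proof.
move=> t0 [/andP[u1 u2] /andP[v1 v2]].
by rewrite /K_alpha_ball /=; split; apply/andP; split; nra.
Qed.

Lemma K_alpha_ball_divr {t : R} {p : R * R} : 0 < t ->
  K_alpha_ball a t p -> K_alpha_ball a 1 (p.1 / t, p.2 / t).
Proof.
case: p => x y t0; have [q1 ->] : exists q1, x = t * q1.
  by exists (x / t); rewrite mulrC divfK ?gt_eqF.
have [q2 ->] : exists q2, y = t * q2.
  by exists (y / t); rewrite mulrC divfK ?gt_eqF.
rewrite /K_alpha_ball /= !(mulrC t) !mulfK ?gt_eqF //.
by case=> /andP[u1 u2] /andP[v1 v2]; split; apply/andP; split; nra.
Qed.

Lemma covers_K_alpha_ball {t : R} : 0 <= t -> covers t (K_alpha a) ->
  forall x : R * R, exists k1 k2 : int,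
    K_alpha_ball a t (x.1 - k1%:~R, x.2 - k2%:~R).
Proof.
move=> t0 cov x; have [k1 [k2 [z [/K_alphaP Kz ->]]]] := cov x.
by exists k1, k2; rewrite /= !addrK; apply: K_alpha_ball_mulr.
Qed.

Lemma K_alpha_ball_covers {t : R} : 0 < t ->
  (forall x : R * R, exists k1 k2 : int,
     K_alpha_ball a t (x.1 - k1%:~R, x.2 - k2%:~R)) ->
  covers t (K_alpha a).
Proof.
move=> t0 near x; have [k1 [k2 /(K_alpha_ball_divr t0) /K_alphaP Kz]] := near x.
exists k1, k2; eexists; split; first exact: Kz.
by rewrite /= !(mulrC t) !divfK ?gt_eqF // !subrK; case: x {Kz}.
Qed.

Lemma K_alpha_ballN {t x y : R} :
  K_alpha_ball a t (x, y) -> K_alpha_ball a t (- x, - y).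
Proof.
rewrite /K_alpha_ball /= => -[/andP[u1 u2] /andP[v1 v2]].
by split; apply/andP; split; lra.
Qed.

(* Both lower bounds reduce by symmetry to x >= 1/2; the bound then comes
   from one of the two strips, according to the position of y. *)
Lemma K_alpha_ball_half_half {t x y : R} : 0 <= a -> a < 1 ->
  2 * x <= -1 \/ 1 <= 2 * x -> 2 * y <= -1 \/ 1 <= 2 * y ->
  K_alpha_ball a t (x, y) -> 2 - a <= 2 * t.
Proof.
move=> a0 a1 hx hy ball; wlog x1 : x y hx hy ball / 1 <= 2 * x.
  move=> gen; case: hx => [hx|x1]; last by apply: (gen x y) => //; right.
  apply: (gen (- x) (- y)); [lra | | exact: K_alpha_ballN | lra].
  by case: hy => hy; [right | left]; lra.
move: ball; rewrite /K_alpha_ball /= => -[/andP[_ u2] /andP[_ v2]] {hx}.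
case: hy => hy.
- have : 0 <= (1 + a) * (2 * x - 1) by apply: mulr_ge0; lra.
  by lra.
- have : 0 <= (1 - a) * (2 * x - 1) by apply: mulr_ge0; lra.
  by lra.
Qed.

Lemma K_alpha_ball_half_zero {t x y : R} : 0 <= a -> a < 1 ->
  2 * x <= -1 \/ 1 <= 2 * x -> y <= -1 \/ y = 0 \/ 1 <= y ->
  K_alpha_ball a t (x, y) -> 1 + a <= 2 * t.
Proof.
move=> a0 a1 hx hy ball; wlog x1 : x y hx hy ball / 1 <= 2 * x.
  move=> gen; case: hx => [hx|x1]; last by apply: (gen x y) => //; right.
  apply: (gen (- x) (- y)); [lra | | exact: K_alpha_ballN | lra].
  by case: hy => [hy|[->|hy]]; [right; right | right; left; rewrite oppr0 |
    left]; lra.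
move: ball; rewrite /K_alpha_ball /= => -[/andP[_ u2] /andP[_ v2]] {hx}.
have pos_u : 0 <= (1 + a) * (2 * x - 1) by apply: mulr_ge0; lra.
have pos_v : 0 <= (1 - a) * (2 * x - 1) by apply: mulr_ge0; lra.
by case: hy => [hy|[hy|hy]]; rewrite ?hy /= in u2 v2 *; lra.
Qed.

Lemma K_alpha_ball_unit_square {t x w : R} : 0 <= a -> a < 1 ->
  1 + a <= 2 * t -> 2 - a <= 2 * t -> 0 <= x < 1 -> 0 <= w < 1 ->
  exists i j : int, K_alpha_ball a t (x - i%:~R, w + a * x - j%:~R).
Proof.
move=> a0 a1 t1 t2 /andP[x0 x1] /andP[w0 w1].
have [c1|c1] := lerP w (t - x).
  by exists 0, 0; rewrite /K_alpha_ball /=; split; apply/andP; split; nra.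
have [c2|c2] := lerP (1 - (t - x)) w.
  by exists 0, 1; rewrite /K_alpha_ball /=; split; apply/andP; split; nra.
by exists 1, 1; rewrite /K_alpha_ball /=; split; apply/andP; split; nra.
Qed.

Lemma K_alpha_ball_near_lattice {t : R} : 0 <= a -> a < 1 ->
  1 + a <= 2 * t -> 2 - a <= 2 * t -> forall p : R * R,
  exists k1 k2 : int, K_alpha_ball a t (p.1 - k1%:~R, p.2 - k2%:~R).
Proof.
move=> a0 a1 t1 t2 [x y]; pose x' := x - (Num.floor x)%:~R.
pose w := y - a * x'; pose w' := w - (Num.floor w)%:~R.
have x'01 : 0 <= x' < 1.
  by have := floor_itv x; rewrite intrD /x' => /andP[? ?]; apply/andP; lra.
have w'01 : 0 <= w' < 1.
  by have := floor_itv w; rewrite intrD /w' => /andP[? ?]; apply/andP; lra.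
have [i [j ball]] := K_alpha_ball_unit_square a0 a1 t1 t2 x'01 w'01.
exists (Num.floor x + i), (Num.floor w + j).
by move: ball; congr (K_alpha_ball a t (_, _)); rewrite !intrD /w' /w /x' /=;
  ring.
Qed.

End KAlpha.

Theorem lemma16 (R : realType) (a : R) (ha0 : 0 <= a) (ha1 : a < 1) :
  mu2 (K_alpha a) = Num.max (1 + a) (2 - a) / 2.
Proof.
set m := Num.max (1 + a) (2 - a) / 2.
have m2 : 2 * m = Num.max (1 + a) (2 - a).
  by rewrite /m mulrC divfK ?pnatr_eq0.
apply: mem_lb_inf.
- have [ma mb] : 1 + a <= 2 * m /\ 2 - a <= 2 * m.
    by rewrite m2 !le_max !lexx orbT.
  split; first lra.
  apply: K_alpha_ball_covers; first lra.
  exact: K_alpha_ball_near_lattice ha0 ha1 ma mb.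
- move=> t [t0 /(covers_K_alpha_ball t0) near].
  have [i [j /= ball_hh]] := near (1/2, 1/2).
  have [k [l /= ball_hz]] := near (1/2, 0); rewrite sub0r in ball_hz.
  have l_cases := intr_cases R (- l); rewrite intrN in l_cases.
  have := K_alpha_ball_half_half ha0 ha1
    (half_sub_intr_cases R i) (half_sub_intr_cases R j) ball_hh.
  have := K_alpha_ball_half_zero ha0 ha1
    (half_sub_intr_cases R k) l_cases ball_hz.
  by rewrite /m ler_pdivrMr // ge_max => ? ?; apply/andP; split; lra.
Qed.
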